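(* Let $\mathcal{A}=\mathbb{R}[x^2,x^3]$ (the subring of $\mathbb{R}[x]$ generated over $\mathbb{R}$ by $x^2$ and $x^3$), with field of fractions $\mathcal{F}$, and let $\mathcal{Z}=\{\alpha x^2+\beta x^3\mid \alpha,\beta\in\mathcal{A}\}$ be the ideal of elements of $\mathcal{A}$ with zero constant term. Then every causal (single-input single-output) transfer function, i.e. every $p\in\mathcal{P}=\{n/d\mid n\in\mathcal{A},\ d\in\mathcal{A}\setminus\mathcal{Z}\}$, is stabilizable.
   Context: For a single-input single-output plant $p\in\mathcal{F}$ and controller $c\in\mathcal{F}$ with $1+pc\neq0$, the closed-loop matrix is $H(p,c)=\begin{pmatrix}(1+pc)^{-1} & -p(1+pc)^{-1}\\ c(1+pc)^{-1} & (1+pc)^{-1}\end{pmatrix}$; $p$ is stabilizable if there exists $c\in\mathcal{F}$ with $1+pc\neq0$ such that all entries of $H(p,c)$ lie in $\mathcal{A}$. *)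

From HB Require Import structures.
From mathcomp Require Import all_boot all_order all_algebra.
From mathcomp Require Import reals.
Set Implicit Arguments. Unset Strict Implicit. Unset Printing Implicit Defensive.
Import Order.TTheory GRing.Theory Num.Theory.
Local Open Scope ring_scope.

Notation "x %:F" := (@FracField.tofrac _ x) : ring_scope.

Section Defs.
Variable R : realType.

(* A = R[x^2, x^3]: the image of R[X,Y] under X |-> x^2, Y |-> x^3.
   A bivariate polynomial is q : {poly {poly R}} (outer variable Y,
   coefficients polynomials in X). *)
Definition inA (p : {poly R}) : Prop :=
  exists q : {poly {poly R}}, p = (map_poly (fun a : {poly R} => a \Po 'X^2) q).['X^3].

Definition inZ (p : {poly R}) : Prop :=
  exists a b : {poly R}, [/\ inA a, inA b & p = a * 'X^2 + b * 'X^3].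

Definition inF (f : {fraction {poly R}}) : Prop :=
  exists a b : {poly R}, [/\ inA a, inA b, b != 0 & f = a%:F / b%:F].

Definition inAF (f : {fraction {poly R}}) : Prop :=
  exists a : {poly R}, inA a /\ f = a%:F.

Definition inP (f : {fraction {poly R}}) : Prop :=
  exists n d : {poly R}, [/\ inA n, inA d, ~ inZ d & f = n%:F / d%:F].

(* p in F is stabilizable: exists c in F, 1 + p c != 0, all entries of H(p,c) in A. *)
Definition stabilizable (p : {fraction {poly R}}) : Prop :=
  exists c : {fraction {poly R}},
    [/\ inF c, 1 + p * c != 0 &
        [/\ inAF ((1 + p * c)^-1), inAF (- p * (1 + p * c)^-1),
             inAF (c * (1 + p * c)^-1) & inAF ((1 + p * c)^-1)]].

End Defs.

(* A = R[x^2, x^3] is the set of polynomials f with f_1 = 0.  Write p = n/d with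
   n = n' g, d = d' g and n', d' coprime in R[x].  As d(0) != 0, g(0) != 0, and
   n' g, d' g in A force n', d' to have "slope" -rho, i.e. f_1 = -rho f_0, where
   rho = g_1 / g_0.  For a Bezout pair u n' + v d' = 1 the controller c = u/v gives
   the closed-loop entries v d', -v n', u d', which lie in A as soon as u and v
   have slope +rho.  Replacing (u, v) by (u + t d', v - t n') with t = k x
   (or k x + x^2, to keep v != 0) fixes the slope of u, and the coefficient of x
   in the Bezout identity then forces the slope of v. *)

From HB Require Import structures.
From mathcomp Require Import all_boot all_order all_algebra.
From mathcomp Require Import reals.
From mathcomp Require Import ring.
Set Implicit Arguments. Unset Strict Implicit. Unset Printing Implicit Defensive.
Import GRing.Theory Num.Theory.
Local Open Scope ring_scope.

Lemma coef1M (S : nzRingType) (p q : {poly S}) :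
  (p * q)`_1 = p`_0 * q`_1 + p`_1 * q`_0.
Proof. by rewrite coefM big_ord_recr big_ord1. Qed.

Lemma coef1M_slopeN (S : comNzRingType) (rho : S) (f h : {poly S}) :
  h`_1 = - (rho * h`_0) -> (f * h)`_1 = h`_0 * (f`_1 - rho * f`_0).
Proof. by move=> h1; rewrite coef1M h1; ring. Qed.

Lemma coef1_mul_eq0 (F : fieldType) (f g : {poly F}) :
  g`_0 != 0 -> (f * g)`_1 = 0 -> f`_1 = - (g`_1 / g`_0 * f`_0).
Proof.
move=> g0; rewrite coef1M => /eqP; rewrite addrC addr_eq0 => /eqP fg1.
by rewrite -[f`_1](mulfK g0) fg1; field.
Qed.

Lemma exists_shift_neq0 (S : idomainType) (k : S) (v n : {poly S}) :
  v != 0 \/ n != 0 -> exists t : {poly S}, [/\ t`_0 = 0, t`_1 = k & v - t * n != 0].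
Proof.
move=> vn.
have [vkn0|vkn] := eqVneq (v - k%:P * 'X * n) 0; last first.
  by exists (k%:P * 'X); rewrite !coefMX coefC.
exists (k%:P * 'X + 'X^2); rewrite !coefD !coefMX coefC coefX /= !addr0; split=> //.
have n0 : n != 0.
  by case: vn => // v0; apply: contra_neq v0 => n0; move: vkn0; rewrite n0 mulr0 subr0.
by rewrite mulrDl opprD addrA vkn0 sub0r oppr_eq0 mulf_neq0 ?expf_neq0 ?polyX_eq0.
Qed.

Lemma Bezout_eq1_slope (F : fieldType) (rho : F) (n d u v : {poly F}) :
  n`_1 = - (rho * n`_0) -> d`_1 = - (rho * d`_0) -> d`_0 != 0 ->
  u * n + v * d = 1 ->
  exists u' v' : {poly F},
    [/\ u' * n + v' * d = 1, v' != 0, u'`_1 = rho * u'`_0 & v'`_1 = rho * v'`_0].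
Proof.
move=> n1 d1 d0 Buv.
have vn : v != 0 \/ n != 0.
  have [n0|] := eqVneq n 0; [left | by right].
  apply/eqP => v0; move: Buv; rewrite n0 v0 mulr0 mul0r addr0 => /eqP.
  by rewrite eq_sym oner_eq0.
have [t [t0 t1 vt]] := exists_shift_neq0 ((rho * u`_0 - u`_1) / d`_0) vn.
have B' : (u + t * d) * n + (v - t * n) * d = 1 by rewrite -Buv; ring.
have u'0 : (u + t * d)`_0 = u`_0 by rewrite coefD coef0M t0 mul0r addr0.
have u'1 : (u + t * d)`_1 = rho * (u + t * d)`_0.
  by rewrite u'0 coefD coef1M t0 t1 mul0r add0r divfK // addrC subrK.
exists (u + t * d), (v - t * n); split=> //.
have : ((u + t * d) * n)`_1 + ((v - t * n) * d)`_1 = 0 by rewrite -coefD B' coefC.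
rewrite (coef1M_slopeN _ n1) (coef1M_slopeN _ d1) u'1 subrr mulr0 add0r.
by move/eqP; rewrite mulf_eq0 (negPf d0) subr_eq0 => /eqP.
Qed.

Lemma coprime_factorization (F : fieldType) (n d : {poly F}) :
  exists g n' d', [/\ n = n' * g, d = d' * g & coprimep n' d'].
Proof.
have [d0|d0] := eqVneq d 0.
  by exists n, 1, 0; rewrite d0 mul1r mul0r coprime1p.
exists (gcdp n d), (n %/ gcdp n d), (d %/ gcdp n d).
by rewrite !divpK ?dvdp_gcdl ?dvdp_gcdr ?coprimep_div_gcd ?d0 ?orbT.
Qed.

Lemma closed_loop_coprime (F : fieldType) (N D U V : F) :
  D != 0 -> V != 0 -> U * N + V * D = 1 ->
  [/\ (1 + N / D * (U / V))^-1 = V * D, - (N / D) * (V * D) = - (V * N)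
    & U / V * (V * D) = U * D].
Proof.
move=> D0 V0 UNVD; split; [|by field|by field].
have -> : 1 + N / D * (U / V) = (U * N + V * D) / (V * D) by field; apply/andP.
by rewrite UNVD mul1r invrK.
Qed.

Section RealPolynomials.
Variable R : realType.
Implicit Types p d n u v : {poly R}.

Lemma inA_coef1 p : inA p <-> p`_1 = 0.
Proof.
split=> [[q ->]|p1].
  rewrite horner_coef coef_sum big1 // => -[[|i] _] _ /=.
    by rewrite -exprM coefMXn /= coef_map_id0 ?comp_poly0 // coef_comp_poly_Xn.
  by rewrite -exprM coefMXn mulnS.
set E := even_poly p; set O := odd_poly p.
have O0 : O = drop_poly 1 O * 'X.
  rewrite -{1}(poly_take_drop 1 O) expr1 [take_poly 1 O]poly_def big_ord1.
  by rewrite coef_odd_poly /= p1 scale0r add0r.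
exists (E%:P + (drop_poly 1 O)%:P * 'X).
rewrite (_ : map_poly _ _ = (E \Po 'X^2)%:P + (drop_poly 1 O \Po 'X^2)%:P * 'X); last first.
  by rewrite rmorphD rmorphM /= !map_polyC map_polyX.
rewrite hornerD hornerMX !hornerC -{1}(poly_even_odd p) -/E -/O.
by rewrite {1}O0 comp_polyM comp_polyX -mulrA -exprSr.
Qed.

Lemma inA_notZ_coef0 d : inA d -> ~ inZ d -> d`_0 != 0.
Proof.
move=> /inA_coef1 d1 nZd; apply/negP => /eqP d0; apply: nZd.
set q := drop_poly 2 d.
have dq : d = q * 'X^2.
  rewrite -{1}(poly_take_drop 2 d) -/q [take_poly 2 d]poly_def big_ord_recr big_ord1.
  by rewrite /= d0 d1 !scale0r !add0r.
exists (q - (q`_1)%:P * 'X), (q`_1)%:P; split.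
- by apply/inA_coef1; rewrite coefB coefMX coefC subrr.
- by apply/inA_coef1; rewrite coefC.
- by rewrite dq mulrBl -mulrA -exprS subrK.
Qed.

Lemma inF_frac u v : v != 0 -> inF (u%:F / v%:F).
Proof.
move=> v0; exists (u * 'X^2), (v * 'X^2); split.
- by apply/inA_coef1; rewrite coefMXn.
- by apply/inA_coef1; rewrite coefMXn.
- by rewrite mulf_neq0 ?expf_neq0 ?polyX_eq0.
- by rewrite !tofracM -mulf_div divff ?mulr1 // mulf_neq0 ?tofrac_eq0 ?polyX_eq0.
Qed.

Lemma inA_mul_slopeN (rho : R) u v :
  u`_1 = rho * u`_0 -> v`_1 = - (rho * v`_0) -> inA (u * v).
Proof. by move=> u1 v1; apply/inA_coef1; rewrite (coef1M_slopeN _ v1) u1 subrr mulr0. Qed.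

Lemma stabilizable_coprime n d u v :
  d != 0 -> v != 0 -> u * n + v * d = 1 ->
  inA (v * d) -> inA (v * n) -> inA (u * d) -> stabilizable (n%:F / d%:F).
Proof.
move=> d0 v0 Buv Avd Avn Aud.
have BF : u%:F * n%:F + v%:F * d%:F = 1 by rewrite -!tofracM -tofracD Buv tofrac1.
have dF : d%:F != 0 by rewrite tofrac_eq0.
have vF : v%:F != 0 by rewrite tofrac_eq0.
have [loop_inv loop_p loop_c] := closed_loop_coprime dF vF BF.
exists (u%:F / v%:F); split; first exact: inF_frac.
  by rewrite -[1 + _]invrK loop_inv invr_eq0 -tofracM tofrac_eq0 mulf_neq0.
rewrite loop_inv loop_p loop_c -!tofracM -tofracN; split; [by exists (v * d)| |by exists (u * d)|by exists (v * d)].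
exists (- (v * n)); split=> //.
by apply/inA_coef1; rewrite coefN (proj1 (inA_coef1 _) Avn) oppr0.
Qed.
End RealPolynomials.

Theorem proposition5 (R : realType) (p : {fraction {poly R}}) :
  inP p -> stabilizable p.
Proof.
case=> n [d [An Ad nZd ->]].
have [g [n' [d' [En Ed coprime_n'd']]]] := coprime_factorization n d.
have := inA_notZ_coef0 Ad nZd; rewrite Ed coef0M mulf_eq0 negb_or => /andP[d'0 g0].
subst n d.
have [[u v] /= Buv] := Bezout_eq1_coprimepP _ _ coprime_n'd'.
have slopeN f : inA (f * g) -> f`_1 = - (g`_1 / g`_0 * f`_0).
  by move/inA_coef1; apply: coef1_mul_eq0.
have [n'1 d'1] := (slopeN _ An, slopeN _ Ad).
have [u' [v' [Buv' v'0 u'1 v'1]]] := Bezout_eq1_slope n'1 d'1 d'0 Buv.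
have gF : g%:F != 0 by rewrite tofrac_eq0; apply: contraNneq g0 => ->; rewrite coef0.
rewrite !tofracM -mulf_div divff // mulr1.
apply: (stabilizable_coprime _ v'0 Buv').
- by apply: contraNneq d'0 => ->; rewrite coef0.
- exact: inA_mul_slopeN v'1 d'1.
- exact: inA_mul_slopeN v'1 n'1.
- exact: inA_mul_slopeN u'1 d'1.
Qed.
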